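(* Let $\Gamma$ be a finitely generated group which is quasi-isometric to the hyperbolic plane $\mathcal H=\{z\in\mathbb C:\operatorname{Im}z>0\}$ with its hyperbolic metric. Then $\Gamma$ is extraterrestrial.
   Context: $\Gamma$ carries the word metric of a finite generating set. A finitely generated group is extraterrestrial if its Cayley graph with respect to some (equivalently any) finite symmetric generating set is extraterrestrial, where a graph $G=(V,E)$ is extraterrestrial if for every $m$ there is $k$ such that for every $r$ there is a triple $(U,F,O)$ of pairwise disjoint finite vertex sets with $U\neq\emptyset$, $|U|\ge m|F|$, a bijection $\mu:U\to O$ with $d_G(u,\mu(u))\le k$, and every path from $U$ to $O$ either contains a vertex of $F$ or has length at least $r$. *)

From Stdlib Require Import Reals Lra List.
Import ListNotations.
Open Scope R_scope.

Set Implicit Arguments.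

Record group_str (G : Type) := GroupStr {
  gmul : G -> G -> G;
  ginv : G -> G;
  gone : G;
  gmul_assoc : forall x y z, gmul x (gmul y z) = gmul (gmul x y) z;
  gmul_1l : forall x, gmul gone x = x;
  gmul_Vl : forall x, gmul (ginv x) x = gone
}.

Fixpoint gprod (G : Type) (g : group_str G) (w : list G) : G :=
  match w with
  | nil => gone g
  | s :: w' => gmul g s (gprod g w')
  end.

(** S is a finite symmetric generating set (finite: it is a list) *)
Definition finite_sym_gen_set (G : Type) (g : group_str G) (S : list G) : Prop :=
  (forall s, In s S -> In (ginv g s) S) /\
  (forall x : G, exists w : list G, (forall s, In s w -> In s S) /\ x = gprod g w).

(** [chain adj x l]: x, l_1, l_2, ... is a walk (consecutive vertices adjacent);
    the walk has vertices x :: l, ends at [last l x], and has length [length l]. *)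
Fixpoint chain (V : Type) (adj : V -> V -> Prop) (x : V) (l : list V) : Prop :=
  match l with
  | nil => True
  | y :: l' => adj x y /\ chain adj y l'
  end.

Definition gdist_le (V : Type) (adj : V -> V -> Prop) (u v : V) (k : nat) : Prop :=
  exists l : list V, chain adj u l /\ last l u = v /\ (length l <= k)%nat.

(** A graph is extraterrestrial. Finite vertex sets are duplicate-free lists;
    |X| = length X. *)
Definition extraterrestrial (V : Type) (adj : V -> V -> Prop) : Prop :=
  forall m : nat, exists k : nat, forall r : nat,
    exists (U F O : list V) (mu : V -> V),
      NoDup U /\ NoDup F /\ NoDup O /\
      (forall x, In x U -> ~ In x F) /\
      (forall x, In x U -> ~ In x O) /\
      (forall x, In x F -> ~ In x O) /\
      U <> nil /\
      (length U >= m * length F)%nat /\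
      (forall u, In u U -> In (mu u) O) /\
      (forall u1 u2, In u1 U -> In u2 U -> mu u1 = mu u2 -> u1 = u2) /\
      (forall o, In o O -> exists u, In u U /\ mu u = o) /\
      (forall u, In u U -> gdist_le adj u (mu u) k) /\
      (forall (u : V) (l : list V),
          In u U -> chain adj u l -> In (last l u) O ->
          (exists x, In x (u :: l) /\ In x F) \/ (length l >= r)%nat).

Definition cayley_adj (G : Type) (g : group_str G) (S : list G) (x y : G) : Prop :=
  exists s, In s S /\ y = gmul g x s.

Definition group_extraterrestrial (G : Type) (g : group_str G) : Prop :=
  exists S : list G, finite_sym_gen_set g S /\ extraterrestrial (cayley_adj g S).

Definition word_dist (G : Type) (g : group_str G) (S : list G) (x y : G) (n : nat) : Prop :=
  gdist_le (cayley_adj g S) x y n /\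
  (forall m, gdist_le (cayley_adj g S) x y m -> (n <= m)%nat).

(** * The hyperbolic plane H = {(a,b) : b > 0} (z = a + i b) *)
Definition in_H (p : R * R) : Prop := 0 < snd p.

Definition arcosh (t : R) : R := ln (t + sqrt (t ^ 2 - 1)).

Definition hyp_dist (p q : R * R) : R :=
  arcosh (1 + ((fst p - fst q) ^ 2 + (snd p - snd q) ^ 2) / (2 * snd p * snd q)).

Definition qi_to_H (G : Type) (g : group_str G) (S : list G) (f : G -> R * R) : Prop :=
  (forall x, in_H (f x)) /\
  exists lam C : R, 1 <= lam /\ 0 <= C /\
    (forall x y n, word_dist g S x y n ->
        / lam * INR n - C <= hyp_dist (f x) (f y) /\
        hyp_dist (f x) (f y) <= lam * INR n + C) /\
    (forall z, in_H z -> exists x, hyp_dist (f x) z <= C).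

(* Transport everything to the upper half plane by the quasi-isometry f. For a
   slope w large compared with the quasi-isometry constants, no edge of the
   Cayley graph jumps from the left of the wedge {|Re z| <= w Im z} to its
   right, so every path between the two sides meets the wedge. Let U consist of
   group elements near the points (-Q^j t_i, Q^j) and O of those near the mirror
   points (Q^j t_i, Q^j), for j < J and i < I, with mu the mirror map; mirror
   points are at distance bounded in terms of I only, which fixes k. Let F be the
   part of the wedge within distance r of U. Log-heights in F range over
   J log Q + O(log r) unit layers, and each layer of the wedge has bounded
   diameter, so |F| = O(J + log r) while |U| = J I. Choosing I of order m, then
   J of order m log r, gives |U| >= m |F|. *)

From Stdlib Require Import Reals List Lra Lia ZArith Classical ClassicalEpsilon.
Import ListNotations.
Open Scope R_scope.

Lemma last_cons {A} (a : A) l d : last (a :: l) d = last l a.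
Proof.
  revert a d; induction l as [|b l IH]; intros a d; [reflexivity|].
  change (last (b :: l) d = last (b :: l) a). now rewrite (IH b d), (IH b a).
Qed.

Lemma gdist_le_mono {V} (adj : V -> V -> Prop) u v n n' :
  gdist_le adj u v n -> (n <= n')%nat -> gdist_le adj u v n'.
Proof. intros [l [H1 [H2 H3]]] Hn. exists l. repeat split; auto; lia. Qed.

Lemma chain_prefix {V} (adj : V -> V -> Prop) l u x :
  chain adj u l -> In x (u :: l) ->
  exists l1, chain adj u l1 /\ last l1 u = x /\ (length l1 <= length l)%nat.
Proof.
  revert u; induction l as [|z l IH]; intros u Hc Hx.
  - destruct Hx as [<-|[]]. now exists [].
  - destruct Hx as [<-|Hx]. { exists []. simpl. repeat split; lia. }
    destruct Hc as [Ha Hc]. destruct (IH z Hc Hx) as [l1 [H1 [H2 H3]]].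
    exists (z :: l1). rewrite last_cons. simpl. repeat split; auto; lia.
Qed.

Lemma chain_meets_wall {V} (adj : V -> V -> Prop) (L Rt W : V -> Prop) :
  (forall x, ~ W x -> L x \/ Rt x) -> (forall x y, adj x y -> L x -> ~ Rt y) ->
  (forall x, L x -> ~ Rt x) ->
  forall l u, chain adj u l -> L u -> Rt (last l u) -> exists x, In x (u :: l) /\ W x.
Proof.
  intros Hcover Hedge HLR. induction l as [|z l IH]; intros u Hc Hu Hl.
  - exfalso. exact (HLR u Hu Hl).
  - destruct Hc as [Ha Hc]. rewrite last_cons in Hl.
    destruct (classic (W z)) as [Hw|Hw]. { exists z. simpl; auto. }
    destruct (Hcover z Hw) as [Hz|Hz].
    + destruct (IH z Hc Hz Hl) as [x [Hx Hx']]. exists x. simpl in *; tauto.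
    + exfalso. exact (Hedge u z Ha Hu Hz).
Qed.

Lemma length_le_levels {V} (h : V -> nat) (P : V -> Prop) (B : nat) :
  (forall l n, NoDup l -> (forall x, In x l -> P x /\ h x = n) -> (length l <= B)%nat) ->
  forall N l, NoDup l -> (forall x, In x l -> P x /\ (h x < N)%nat) -> (length l <= N * B)%nat.
Proof.
  intros HB. induction N as [|N IH]; intros l Hl Hx.
  - destruct l as [|x l]; [simpl; lia|]. destruct (Hx x (or_introl eq_refl)); lia.
  - set (p := fun x => Nat.eqb (h x) N).
    assert (E : length l = (length (filter p l) + length (filter (fun x => negb (p x)) l))%nat).
    { clear. induction l as [|a l IH]; simpl; [reflexivity|]. destruct (p a); simpl; lia. }
    assert (A1 : (length (filter p l) <= B)%nat).
    { apply (HB _ N (NoDup_filter p Hl)). intros x Hin. apply filter_In in Hin.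
      destruct Hin as [Hin Hn]. split; [apply Hx, Hin|]. now apply Nat.eqb_eq. }
    assert (A2 : (length (filter (fun x => negb (p x)) l) <= N * B)%nat).
    { apply IH; [now apply NoDup_filter|]. intros x Hin. apply filter_In in Hin.
      destruct Hin as [Hin Hn]. destruct (Hx x Hin) as [HP Hh]. split; [exact HP|].
      unfold p in Hn. destruct (Nat.eqb_spec (h x) N); simpl in Hn; [discriminate|lia]. }
    simpl. lia.
Qed.

Lemma NoDup_list_prod {A B} (l : list A) (l' : list B) :
  NoDup l -> NoDup l' -> NoDup (list_prod l l').
Proof.
  intros Hl Hl'. induction Hl as [|a l Ha Hl IH]; simpl; [constructor|].
  apply NoDup_app; [|exact IH|].
  - apply NoDup_map_NoDup_ForallPairs; [|exact Hl']. intros x y _ _ E. now injection E.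
  - intros [x y] H1 H2. apply in_map_iff in H1. destruct H1 as [z [E _]].
    injection E; intros; subst. apply in_prod_iff in H2. tauto.
Qed.

Lemma exists_factor_through_inj {I V : Type} (X Y : I -> V) :
  (forall p q, X p = X q -> p = q) -> exists mu : V -> V, forall p, mu (X p) = Y p.
Proof.
  intros HX. destruct (choice (fun x y => forall p, X p = x -> y = Y p)) as [mu Hmu].
  - intros x. destruct (classic (exists p, X p = x)) as [[p <-]|Hn].
    + exists (Y p). intros q E. now rewrite (HX _ _ E).
    + exists x. intros p E. exfalso. eauto.
  - exists mu. intros p. now apply Hmu.
Qed.

(* U and O are the images of [idx] under X and Y, and mu maps X p to Y p. *)
Lemma extraterrestrial_of_families {V I : Type} (adj : V -> V -> Prop) (L Rt W : V -> Prop) :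
  (forall x, L x -> ~ Rt x) -> (forall x, L x -> ~ W x) -> (forall x, W x -> ~ Rt x) ->
  (forall m : nat, exists k : nat, forall r : nat,
     exists (idx : list I) (X Y : I -> V) (F : list V),
       NoDup idx /\ idx <> [] /\
       (forall p q, X p = X q -> p = q) /\ (forall p q, Y p = Y q -> p = q) /\
       (forall p, L (X p)) /\ (forall p, Rt (Y p)) /\
       NoDup F /\ (forall x, In x F -> W x) /\
       (length idx >= m * length F)%nat /\
       (forall p, In p idx -> gdist_le adj (X p) (Y p) k) /\
       (forall p q l, In p idx -> In q idx -> chain adj (X p) l -> last l (X p) = Y q ->
          (length l < r)%nat -> exists x, In x (X p :: l) /\ In x F)) ->
  extraterrestrial adj.
Proof.
  intros HLR HLW HWR Hfam m. destruct (Hfam m) as [k Hk]. exists k. intros r.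
  destruct (Hk r)
    as (idx & X & Y & F & Hidx & Hne & HX & HY & HL & HR & HF & HFW & Hcard & Hk' & Hcross).
  destruct (exists_factor_through_inj X Y HX) as [mu HmuX].
  exists (map X idx), F, (map Y idx), mu.
  repeat split; auto.
  1-2: apply NoDup_map_NoDup_ForallPairs; [intros a b _ _; auto|exact Hidx].
  - intros x Hx HxF. apply in_map_iff in Hx. destruct Hx as [p [<- _]].
    exact (HLW _ (HL p) (HFW _ HxF)).
  - intros x Hx Hy. apply in_map_iff in Hx, Hy. destruct Hx as [p [<- _]]. destruct Hy as [q [E _]].
    apply (HLR (X p)); [apply HL|rewrite <- E; apply HR].
  - intros x HxF Hy. apply in_map_iff in Hy. destruct Hy as [q [<- _]].
    exact (HWR _ (HFW _ HxF) (HR q)).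
  - destruct idx; [contradiction|discriminate].
  - now rewrite length_map.
  - intros u Hu. apply in_map_iff in Hu. destruct Hu as [p [<- Hp]]. rewrite HmuX.
    now apply in_map.
  - intros u1 u2 H1 H2 E. apply in_map_iff in H1, H2. destruct H1 as [p1 [<- Hp1]].
    destruct H2 as [p2 [<- Hp2]]. rewrite !HmuX in E. now rewrite (HY _ _ E).
  - intros o Ho. apply in_map_iff in Ho. destruct Ho as [p [<- Hp]]. exists (X p).
    split; [now apply in_map|apply HmuX].
  - intros u Hu. apply in_map_iff in Hu. destruct Hu as [p [<- Hp]]. rewrite HmuX. now apply Hk'.
  - intros u l Hu Hch Hl. apply in_map_iff in Hu, Hl.
    destruct Hu as [p [<- Hp]]. destruct Hl as [q [Eq Hq]].
    destruct (Compare_dec.le_lt_dec r (length l)) as [Hr|Hr]; [right; lia|left].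
    now apply (Hcross p q l).
Qed.

Lemma gmul_Vr {G} (g : group_str G) x : gmul g x (ginv g x) = gone g.
Proof.
  rewrite <- (gmul_1l g (gmul g x (ginv g x))), <- (gmul_Vl g (ginv g x)) at 1.
  rewrite <- gmul_assoc, (gmul_assoc g (ginv g x) x (ginv g x)), gmul_Vl, gmul_1l.
  apply gmul_Vl.
Qed.

Fixpoint walk {G} (g : group_str G) (x : G) (w : list G) : list G :=
  match w with nil => nil | s :: w' => gmul g x s :: walk g (gmul g x s) w' end.

Lemma walk_spec {G} (g : group_str G) S x w : (forall s, In s w -> In s S) ->
  chain (cayley_adj g S) x (walk g x w) /\ last (walk g x w) x = gmul g x (gprod g w) /\
  length (walk g x w) = length w.
Proof.
  revert x; induction w as [|s w IH]; intros x Hw.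
  - simpl. repeat split. rewrite <- (gmul_Vl g x), gmul_assoc, gmul_Vr, gmul_1l. reflexivity.
  - destruct (IH (gmul g x s)) as [H1 [H2 H3]]; [intros; apply Hw; simpl; auto|].
    simpl walk. rewrite last_cons, H2, <- gmul_assoc. simpl. rewrite H3.
    repeat split; auto. exists s. split; [apply Hw; simpl|]; auto.
Qed.

Lemma cayley_connected {G} (g : group_str G) S : finite_sym_gen_set g S ->
  forall x y, exists n, gdist_le (cayley_adj g S) x y n.
Proof.
  intros [_ Hgen] x y. destruct (Hgen (gmul g (ginv g x) y)) as [w [Hw Hp]].
  destruct (walk_spec g S x w Hw) as [H1 [H2 H3]].
  exists (length w), (walk g x w). repeat split; [exact H1| |lia].
  rewrite H2, <- Hp, gmul_assoc, gmul_Vr, gmul_1l. reflexivity.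
Qed.

Lemma word_dist_exists {G} (g : group_str G) S : finite_sym_gen_set g S ->
  forall x y, exists n, word_dist g S x y n.
Proof.
  intros HS x y. destruct (cayley_connected g S HS x y) as [n Hn]. revert Hn.
  induction n as [n IH] using (well_founded_induction Wf_nat.lt_wf). intros Hn.
  destruct (classic (exists n', gdist_le (cayley_adj g S) x y n' /\ (n' < n)%nat)) as [[n' [Hn' Hlt]]|Hmin].
  - exact (IH n' Hlt Hn').
  - exists n. split; [exact Hn|]. intros n' Hn'.
    destruct (Compare_dec.le_lt_dec n n'); [assumption|]. exfalso; eauto.
Qed.

Fixpoint ball {G} (g : group_str G) (S : list G) (y : G) (N : nat) : list G :=
  match N with
  | O => [y]
  | Datatypes.S N' => y :: flat_map (fun s => ball g S (gmul g y s) N') S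
  end.

Fixpoint ball_size (k N : nat) : nat :=
  match N with O => 1 | Datatypes.S N' => 1 + k * ball_size k N' end.

Lemma length_ball {G} (g : group_str G) S y N : length (ball g S y N) = ball_size (length S) N.
Proof.
  revert y; induction N as [|N IH]; intros y; simpl; [reflexivity|].
  rewrite (flat_map_constant_length (c := ball_size (length S) N)); [lia|intros; apply IH].
Qed.

Lemma in_ball_of_chain {G} (g : group_str G) S l y N :
  chain (cayley_adj g S) y l -> (length l <= N)%nat -> In (last l y) (ball g S y N).
Proof.
  revert y N; induction l as [|z l IH]; intros y N Hc Hl.
  - destruct N; simpl; auto.
  - destruct N as [|N]; [simpl in Hl; lia|]. destruct Hc as [[s [Hs ->]] Hc].
    rewrite last_cons. simpl. right. apply in_flat_map. exists s.
    split; [exact Hs|]. apply IH; [exact Hc|simpl in Hl; lia].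
Qed.

Lemma gdist_le_of_in_ball {G} (g : group_str G) S N y x :
  In x (ball g S y N) -> gdist_le (cayley_adj g S) y x N.
Proof.
  revert y x; induction N as [|N IH]; intros y x Hx; simpl in Hx.
  - destruct Hx as [<-|[]]. now exists [].
  - destruct Hx as [<-|Hx]. { exists []. simpl. repeat split; lia. }
    apply in_flat_map in Hx. destruct Hx as [s [Hs Hx]].
    destruct (IH _ _ Hx) as [l [H1 [H2 H3]]].
    exists (gmul g y s :: l). rewrite last_cons. simpl. repeat split; auto; [|lia].
    now exists s.
Qed.

Definition cosh_hdist (p q : R * R) : R :=
  1 + ((fst p - fst q) ^ 2 + (snd p - snd q) ^ 2) / (2 * snd p * snd q).

Lemma Rdiv_le_of_le_mul n d X : 0 < d -> n <= X * d -> n / d <= X.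
Proof.
  intros Hd H. apply Rmult_le_reg_r with d; [exact Hd|].
  unfold Rdiv. rewrite Rmult_assoc, Rinv_l; lra.
Qed.

Lemma Rle_div_of_mul_le n d X : 0 < d -> X * d <= n -> X <= n / d.
Proof.
  intros Hd H. apply Rmult_le_reg_r with d; [exact Hd|].
  unfold Rdiv. rewrite Rmult_assoc, Rinv_l; lra.
Qed.

Lemma ln_le x y : 0 < x -> x <= y -> ln x <= ln y.
Proof.
  intros Hx Hxy. destruct (Rle_lt_or_eq_dec _ _ Hxy) as [H|<-]; [|lra].
  left. now apply ln_increasing.
Qed.

Lemma exp_le x y : x <= y -> exp x <= exp y.
Proof.
  intros Hxy. destruct (Rle_lt_or_eq_dec _ _ Hxy) as [H|<-]; [|lra].
  left. now apply exp_increasing.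
Qed.

Lemma cosh_hdist_ge1 p q : 0 < snd p -> 0 < snd q -> 1 <= cosh_hdist p q.
Proof.
  intros Hp Hq. unfold cosh_hdist.
  enough (0 <= ((fst p - fst q) ^ 2 + (snd p - snd q) ^ 2) / (2 * snd p * snd q)) by lra.
  apply Rle_div_of_mul_le; [nra|].
  pose proof (pow2_ge_0 (fst p - fst q)); pose proof (pow2_ge_0 (snd p - snd q)); lra.
Qed.

Lemma cosh_hdist_le_exp p q D : 0 < snd p -> 0 < snd q ->
  hyp_dist p q <= D -> cosh_hdist p q <= exp D.
Proof.
  intros Hp Hq H. pose proof (cosh_hdist_ge1 p q Hp Hq).
  pose proof (sqrt_pos (cosh_hdist p q ^ 2 - 1)).
  change (hyp_dist p q) with (ln (cosh_hdist p q + sqrt (cosh_hdist p q ^ 2 - 1))) in H.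
  rewrite <- (exp_ln (cosh_hdist p q)) by lra. apply exp_le.
  eapply Rle_trans; [|exact H]. apply ln_le; lra.
Qed.

(* arcosh t = ln (t + sqrt (t^2 - 1)) <= ln (2 t) *)
Lemma hyp_dist_le_ln p q M : 0 < snd p -> 0 < snd q ->
  cosh_hdist p q <= M -> hyp_dist p q <= ln (2 * M).
Proof.
  intros Hp Hq H. pose proof (cosh_hdist_ge1 p q Hp Hq).
  pose proof (sqrt_pos (cosh_hdist p q ^ 2 - 1)).
  assert (sqrt (cosh_hdist p q ^ 2 - 1) <= cosh_hdist p q).
  { rewrite <- (sqrt_pow2 (cosh_hdist p q)) at 2 by lra. apply sqrt_le_1_alt. lra. }
  change (hyp_dist p q) with (ln (cosh_hdist p q + sqrt (cosh_hdist p q ^ 2 - 1))).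
  apply ln_le; lra.
Qed.

Lemma Rabs_le_inv a b : Rabs a <= b -> - b <= a <= b.
Proof. unfold Rabs. destruct (Rcase_abs a); lra. Qed.

Lemma Rabs_le_of_sq_le x y : 0 <= y -> x ^ 2 <= y ^ 2 -> Rabs x <= y.
Proof. intros Hy H. unfold Rabs. destruct (Rcase_abs x); nra. Qed.

Lemma sq_diff_le_of_cosh_hdist_le p q E : 0 < snd p -> 0 < snd q -> cosh_hdist p q <= E ->
  (fst p - fst q) ^ 2 <= 2 * E * snd p * snd q /\ (snd p - snd q) ^ 2 <= 2 * E * snd p * snd q.
Proof.
  intros Hp Hq H. pose proof (cosh_hdist_ge1 p q Hp Hq). unfold cosh_hdist in *.
  set (N := (fst p - fst q) ^ 2 + (snd p - snd q) ^ 2) in *.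
  set (d := 2 * snd p * snd q) in *.
  assert (Hd : 0 < d) by (unfold d; nra).
  assert (N <= (E - 1) * d).
  { replace N with (N / d * d) by (field; lra). apply Rmult_le_compat_r; lra. }
  pose proof (pow2_ge_0 (fst p - fst q)). pose proof (pow2_ge_0 (snd p - snd q)).
  unfold N, d in *. split; nra.
Qed.

Lemma le_mul_of_sq_diff_le b b' E : 0 < b -> 0 < b' -> 0 <= E ->
  (b - b') ^ 2 <= 2 * E * b * b' -> b' <= (2 * E + 2) * b.
Proof.
  intros Hb Hb' HE H. destruct (Rle_dec b' ((2 * E + 2) * b)) as [|Hn]; [assumption|exfalso].
  apply Rnot_le_lt in Hn. set (K := 2 * E + 2) in *.
  assert (H1 : b' - b >= b' * (K - 1) / K).
  { apply Rle_ge, Rdiv_le_of_le_mul; unfold K in *; nra. }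
  assert (H2 : 0 < b' * (K - 1) / K).
  { unfold Rdiv. apply Rmult_lt_0_compat; [unfold K in *; nra|]. apply Rinv_0_lt_compat; unfold K; lra. }
  assert (H3 : (b' * (K - 1) / K) ^ 2 <= 2 * E * b * b') by nra.
  assert (H4 : (b' * (K - 1) / K) ^ 2 * K ^ 2 = (b' * (K - 1)) ^ 2) by (field; unfold K; lra).
  assert (H5 : (b' * (K - 1)) ^ 2 <= 2 * E * b * b' * K ^ 2).
  { rewrite <- H4. apply Rmult_le_compat_r; [nra|exact H3]. }
  assert (H6 : b' * (K - 1) ^ 2 <= 2 * E * b * K ^ 2) by nra.
  assert (H7 : 2 * E * b * K ^ 2 <= 2 * E * K * b') by (unfold K in *; nra).
  assert (H8 : (K - 1) ^ 2 <= 2 * E * K) by nra.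
  unfold K in H8. nra.
Qed.

Definition height_ratio (D : R) : R := 2 * exp D + 2.
Definition shift_ratio (D : R) : R := 2 * exp D * height_ratio D + 1.

Lemma height_ratio_ge2 D : 2 <= height_ratio D.
Proof. unfold height_ratio. pose proof (exp_pos D). lra. Qed.

Lemma shift_ratio_ge1 D : 1 <= shift_ratio D.
Proof. unfold shift_ratio. pose proof (exp_pos D). pose proof (height_ratio_ge2 D). nra. Qed.

Lemma hyp_ball_in_box z p D : 0 < snd z -> 0 < snd p -> hyp_dist z p <= D ->
  snd p <= height_ratio D * snd z /\ snd z <= height_ratio D * snd p /\
  Rabs (fst z - fst p) <= shift_ratio D * snd p.
Proof.
  intros Hz Hp H. pose proof (cosh_hdist_le_exp _ _ _ Hz Hp H) as HA.
  destruct (sq_diff_le_of_cosh_hdist_le _ _ _ Hz Hp HA) as [H1 H2].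
  pose proof (exp_pos D) as HE. pose proof (height_ratio_ge2 D) as HK.
  assert (R1 : snd p <= height_ratio D * snd z) by (apply le_mul_of_sq_diff_le; lra).
  assert (R2 : snd z <= height_ratio D * snd p) by (apply le_mul_of_sq_diff_le; nra).
  split; [exact R1|]. split; [exact R2|].
  apply Rabs_le_of_sq_le; [pose proof (shift_ratio_ge1 D); nra|].
  set (K := height_ratio D) in *.
  assert (2 * exp D * snd z * snd p <= 2 * exp D * K * snd p ^ 2).
  { assert (2 * exp D * snd p > 0) by nra. nra. }
  assert (2 * exp D * K <= shift_ratio D ^ 2).
  { unfold shift_ratio. fold K. assert (0 <= 2 * exp D * K) by nra. nra. }
  assert (2 * exp D * K * snd p ^ 2 <= shift_ratio D ^ 2 * snd p ^ 2) by (apply Rmult_le_compat_r; nra).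
  nra.
Qed.

Definition in_wedge (w : R) (z : R * R) : Prop := Rabs (fst z) <= w * snd z.
Definition left_of_wedge (w : R) (z : R * R) : Prop := fst z < - w * snd z.
Definition right_of_wedge (w : R) (z : R * R) : Prop := w * snd z < fst z.

Lemma cosh_hdist_across_wedge p q w : 0 < w -> 0 < snd p -> 0 < snd q ->
  left_of_wedge w p -> right_of_wedge w q -> 1 + 2 * w ^ 2 <= cosh_hdist p q.
Proof.
  unfold left_of_wedge, right_of_wedge. intros Hw Hp Hq H1 H2.
  unfold cosh_hdist. apply Rplus_le_compat_l, Rle_div_of_mul_le; [nra|].
  assert (H3 : w * (snd p + snd q) < fst q - fst p) by nra.
  assert (H4 : (w * (snd p + snd q)) ^ 2 <= (fst q - fst p) ^ 2).
  { simpl. rewrite !Rmult_1_r. apply Rmult_le_compat; nra. }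
  assert (w ^ 2 * (snd p - snd q) ^ 2 >= 0) by (apply Rle_ge, Rmult_le_pos; apply pow2_ge_0).
  pose proof (pow2_ge_0 (snd p - snd q)).
  replace ((fst p - fst q) ^ 2) with ((fst q - fst p) ^ 2) by ring. nra.
Qed.

Lemma no_jump_across_wedge p q w D : 0 < snd p -> 0 < snd q -> exp D <= w ->
  hyp_dist p q <= D -> left_of_wedge w p -> ~ right_of_wedge w q.
Proof.
  intros Hp Hq Hw H Hl Hr. pose proof (exp_pos D).
  pose proof (cosh_hdist_le_exp _ _ _ Hp Hq H).
  pose proof (cosh_hdist_across_wedge p q w ltac:(lra) Hp Hq Hl Hr). nra.
Qed.

Lemma outside_wedge_near_far_point z b t D w s : s = 1 \/ s = -1 ->
  0 < snd z -> 0 < b -> 0 < w -> shift_ratio D + height_ratio D * w + 1 <= t ->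
  hyp_dist z (s * (b * t), b) <= D -> w * snd z < s * fst z.
Proof.
  intros Hs Hz Hb Hw Ht H. destruct (hyp_ball_in_box z (s * (b * t), b) D Hz Hb H) as [_ [H2 H3]].
  simpl in *. apply Rabs_le_inv in H3. pose proof (height_ratio_ge2 D).
  assert (w * snd z <= w * (height_ratio D * b)) by (apply Rmult_le_compat_l; lra).
  assert (b * t >= b * (shift_ratio D + height_ratio D * w + 1)) by nra.
  destruct Hs; subst s; nra.
Qed.

Lemma le_of_pow_le_mul Q K j j' : 1 <= Q -> K ^ 2 < Q -> Q ^ j <= K ^ 2 * Q ^ j' -> (j <= j')%nat.
Proof.
  intros HQ HK H. destruct (Compare_dec.le_lt_dec j j') as [|Hlt]; [assumption|exfalso].
  assert (H0 : Q ^ S j' <= Q ^ j) by (apply Rle_pow; [lra|lia]).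
  simpl in H0. assert (H1 : 0 < Q ^ j') by (apply pow_lt; lra).
  assert (K ^ 2 * Q ^ j' < Q * Q ^ j') by (apply Rmult_lt_compat_r; lra). lra.
Qed.

Lemma INR_eq_of_dist_lt1 (i i' : nat) : Rabs (INR i - INR i') < 1 -> i = i'.
Proof.
  intros H. apply Rabs_def2 in H.
  destruct (Nat.lt_trichotomy i i') as [Hl|[He|Hl]]; [exfalso|exact He|exfalso];
    apply le_INR in Hl; rewrite S_INR in Hl; lra.
Qed.

(* Rows j are told apart by heights, as Q exceeds the square of the height
   ratio; within a row the horizontal spacing 3 M Q^j exceeds twice the shift. *)
Lemma near_grid_point_unique z D Q T s j j' i i' : 0 < snd z -> 1 <= Q ->
  height_ratio D ^ 2 < Q -> Rabs s = 1 ->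
  hyp_dist z (s * (Q ^ j * (T + 3 * shift_ratio D * INR i)), Q ^ j) <= D ->
  hyp_dist z (s * (Q ^ j' * (T + 3 * shift_ratio D * INR i')), Q ^ j') <= D -> j = j' /\ i = i'.
Proof.
  intros Hz HQ HKQ Hs H H'.
  assert (Hp : 0 < Q ^ j) by (apply pow_lt; lra). assert (Hp' : 0 < Q ^ j') by (apply pow_lt; lra).
  destruct (hyp_ball_in_box _ (_, Q ^ j) D Hz Hp H) as [A1 [A2 A3]].
  destruct (hyp_ball_in_box _ (_, Q ^ j') D Hz Hp' H') as [B1 [B2 B3]].
  simpl in *. set (K := height_ratio D) in *. set (M := shift_ratio D) in *.
  assert (HK : 2 <= K) by apply height_ratio_ge2. assert (HM : 1 <= M) by apply shift_ratio_ge1.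
  assert (E1 : (j <= j')%nat) by (apply (le_of_pow_le_mul Q K); nra).
  assert (E2 : (j' <= j)%nat) by (apply (le_of_pow_le_mul Q K); nra).
  assert (j = j') as <- by lia. split; [reflexivity|]. apply INR_eq_of_dist_lt1.
  set (a := s * (Q ^ j * (T + 3 * M * INR i))) in *.
  set (a' := s * (Q ^ j * (T + 3 * M * INR i'))) in *.
  assert (Hd : Rabs (a - a') <= 2 * M * Q ^ j).
  { replace (a - a') with (- (fst z - a) + (fst z - a')) by ring.
    eapply Rle_trans; [apply Rabs_triang|]. rewrite Rabs_Ropp. lra. }
  replace (a - a') with (s * (3 * M * Q ^ j) * (INR i - INR i')) in Hd by (unfold a, a'; ring).
  rewrite !Rabs_mult, Hs, (Rabs_right 3), (Rabs_right M), (Rabs_right (Q ^ j)) in Hd by lra.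
  assert (Rabs (INR i - INR i') * (3 * M * Q ^ j) <= (2/3) * (3 * M * Q ^ j)) by lra.
  apply Rmult_le_reg_r in H0; [lra|nra].
Qed.

Lemma cosh_hdist_mirror_le z z' b t tmax D : 0 < snd z -> 0 < snd z' -> 0 < b -> 0 <= t <= tmax ->
  hyp_dist z (-1 * (b * t), b) <= D -> hyp_dist z' (1 * (b * t), b) <= D ->
  cosh_hdist z z' <= 1 + ((2 * shift_ratio D + 2 * tmax) ^ 2 + height_ratio D ^ 2) * height_ratio D ^ 2.
Proof.
  intros Hz Hz' Hb Ht H H'.
  destruct (hyp_ball_in_box z (-1 * (b * t), b) D Hz Hb H) as [A1 [A2 A3]].
  destruct (hyp_ball_in_box z' (1 * (b * t), b) D Hz' Hb H') as [B1 [B2 B3]].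
  simpl in *. set (K := height_ratio D) in *. set (M := shift_ratio D) in *.
  assert (HK : 2 <= K) by apply height_ratio_ge2. assert (HM : 1 <= M) by apply shift_ratio_ge1.
  apply Rabs_le_inv in A3, B3. set (L := 2 * M + 2 * tmax).
  assert (Ha : (fst z - fst z') ^ 2 <= (L * b) ^ 2) by (apply pow_maj_Rabs, Rabs_le; unfold L; nra).
  assert (Hh : (snd z - snd z') ^ 2 <= (K * b) ^ 2) by (apply pow_maj_Rabs, Rabs_le; nra).
  assert (Hbb : b * b <= (K * snd z) * (K * snd z')) by (apply Rmult_le_compat; lra).
  unfold cosh_hdist. apply Rplus_le_compat_l, Rdiv_le_of_le_mul; [nra|].
  assert (N1 : (fst z - fst z') ^ 2 + (snd z - snd z') ^ 2 <= (L ^ 2 + K ^ 2) * (b * b)) by nra.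
  assert (N2 : (L ^ 2 + K ^ 2) * (b * b) <= (L ^ 2 + K ^ 2) * ((K * snd z) * (K * snd z')))
    by (apply Rmult_le_compat_l; nra).
  nra.
Qed.

Lemma cosh_hdist_wedge_layer_le z z' w : 0 < snd z -> 0 < snd z' -> 0 < w ->
  in_wedge w z -> in_wedge w z' -> ln (snd z) < ln (snd z') + 1 -> ln (snd z') < ln (snd z) + 1 ->
  cosh_hdist z z' <= 1 + (w ^ 2 * (1 + exp 1) ^ 2 * exp 1 + exp 1 ^ 3).
Proof.
  unfold in_wedge. intros Hz Hz' Hw H1 H2 L1 L2.
  set (e := exp 1). assert (He : 1 <= e) by (unfold e; pose proof (exp_ineq1_le 1); lra).
  set (b := snd z) in *. set (b' := snd z') in *.
  assert (R1 : b < e * b').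
  { rewrite <- (exp_ln b), <- (exp_ln b') by assumption. unfold e. rewrite <- exp_plus.
    apply exp_increasing. lra. }
  assert (R2 : b' < e * b).
  { rewrite <- (exp_ln b), <- (exp_ln b') by assumption. unfold e. rewrite <- exp_plus.
    apply exp_increasing. lra. }
  apply Rabs_le_inv in H1, H2.
  assert (Ha : (fst z - fst z') ^ 2 <= (w * (1 + e) * b) ^ 2) by (apply pow_maj_Rabs, Rabs_le; nra).
  assert (Hh : (b - b') ^ 2 <= (e * b) ^ 2) by (apply pow_maj_Rabs, Rabs_le; nra).
  assert (Hbb : b * b <= b * (e * b')) by (apply Rmult_le_compat_l; lra).
  unfold cosh_hdist. fold b b'. apply Rplus_le_compat_l, Rdiv_le_of_le_mul; [nra|].
  set (c := w ^ 2 * (1 + e) ^ 2 + e ^ 2).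
  assert (N1 : (fst z - fst z') ^ 2 + (b - b') ^ 2 <= c * (b * b)) by (unfold c; nra).
  assert (N2 : c * (b * b) <= c * (b * (e * b'))) by (apply Rmult_le_compat_l; unfold c; nra).
  unfold c in *. nra.
Qed.

Definition nfloor (t : R) : nat := Z.to_nat (Int_part t).
Definition nceil (t : R) : nat := Z.to_nat (up t).

Lemma nfloor_spec t : 0 <= t -> INR (nfloor t) <= t < INR (nfloor t) + 1.
Proof.
  intros Ht. destruct (base_Int_part t) as [H1 H2].
  assert (Hz : (0 <= Int_part t)%Z).
  { apply le_IZR. destruct (Z_le_gt_dec 0 (Int_part t)) as [|Hg]; [now apply IZR_le|].
    assert (Int_part t <= -1)%Z as Hle by lia. apply IZR_le in Hle. lra. }
  unfold nfloor. rewrite INR_IZR_INZ, Z2Nat.id by exact Hz. lra.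
Qed.

Lemma nceil_spec t : t <= INR (nceil t).
Proof.
  destruct (archimed t) as [H1 _]. unfold nceil. destruct (Z_le_gt_dec 0 (up t)) as [Hz|Hz].
  - rewrite INR_IZR_INZ, Z2Nat.id by lia. lra.
  - assert (up t <= 0)%Z as Hle by lia. apply IZR_le in Hle. pose proof (pos_INR (Z.to_nat (up t))). lra.
Qed.

Section QuasiIsometricToH.

Variables (G : Type) (g : group_str G) (S : list G) (f : G -> R * R) (lam C : R)
  (cf : R * R -> G).
Hypothesis HS : finite_sym_gen_set g S.
Hypothesis Hlam : 1 <= lam.
Hypothesis Hf_H : forall x, 0 < snd (f x).
Hypothesis Hqi : forall x y n, word_dist g S x y n ->
  / lam * INR n - C <= hyp_dist (f x) (f y) /\ hyp_dist (f x) (f y) <= lam * INR n + C.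
Hypothesis Hcf : forall z, in_H z -> hyp_dist (f (cf z)) z <= C.

Local Notation adj := (cayley_adj g S).

Lemma hyp_dist_le_of_gdist_le x y n :
  gdist_le adj x y n -> hyp_dist (f x) (f y) <= lam * INR n + C.
Proof.
  intros Hd. destruct (word_dist_exists g S HS x y) as [n0 Hn0].
  pose proof (proj2 (Hqi _ _ _ Hn0)). destruct Hn0 as [_ Hmin].
  specialize (Hmin n Hd). apply le_INR in Hmin. nra.
Qed.

Lemma gdist_le_of_hyp_dist_le x y D N :
  hyp_dist (f x) (f y) <= D -> lam * (D + C) <= INR N -> gdist_le adj x y N.
Proof.
  intros Hd HN. destruct (word_dist_exists g S HS x y) as [n0 Hn0].
  pose proof (proj1 (Hqi _ _ _ Hn0)) as H. destruct Hn0 as [Hg _].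
  apply gdist_le_mono with n0; [exact Hg|]. apply INR_le.
  replace (INR n0) with (lam * (/ lam * INR n0)) by (field; lra).
  apply Rle_trans with (lam * (D + C)); [apply Rmult_le_compat_l|]; lra.
Qed.

Let K := height_ratio C.
Let M := shift_ratio C.

(* Wide enough that one edge of the Cayley graph cannot jump across it. *)
Definition wedge_slope : R := exp (lam + C) + 1.

Definition grid_base : R := K ^ 2 + 1.

Definition grid_point (s : R) (p : nat * nat) : R * R :=
  (s * (grid_base ^ fst p * (M + K * wedge_slope + 1 + 3 * M * INR (snd p))), grid_base ^ fst p).

Definition left_pt (p : nat * nat) : G := cf (grid_point (-1) p).
Definition right_pt (p : nat * nat) : G := cf (grid_point 1 p).

Let w := wedge_slope.
Let Q := grid_base.

Lemma wedge_slope_ge1 : 1 <= w.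
Proof. unfold w, wedge_slope. pose proof (exp_pos (lam + C)). lra. Qed.

Lemma grid_base_gt : K ^ 2 < Q.
Proof. unfold Q, grid_base. lra. Qed.

Lemma grid_base_ge1 : 1 <= Q.
Proof. unfold Q, grid_base. pose proof (pow2_ge_0 K). lra. Qed.

Lemma grid_height_pos j : 0 < Q ^ j.
Proof. apply pow_lt. pose proof grid_base_ge1. lra. Qed.

Lemma near_grid_point s p : hyp_dist (f (cf (grid_point s p))) (grid_point s p) <= C.
Proof. apply Hcf. apply grid_height_pos. Qed.

Lemma cf_grid_point_outside_wedge s p : s = 1 \/ s = -1 ->
  w * snd (f (cf (grid_point s p))) < s * fst (f (cf (grid_point s p))).
Proof.
  intros Hs.
  apply (outside_wedge_near_far_point _ (Q ^ fst p) (M + K * w + 1 + 3 * M * INR (snd p)) C); auto.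
  - apply grid_height_pos.
  - pose proof wedge_slope_ge1. lra.
  - pose proof (pos_INR (snd p)). pose proof (shift_ratio_ge1 C). unfold M, K. nra.
  - apply near_grid_point.
Qed.

Lemma left_pt_left p : left_of_wedge w (f (left_pt p)).
Proof. unfold left_of_wedge. pose proof (cf_grid_point_outside_wedge (-1) p). unfold left_pt. lra. Qed.

Lemma right_pt_right p : right_of_wedge w (f (right_pt p)).
Proof. unfold right_of_wedge. pose proof (cf_grid_point_outside_wedge 1 p). unfold right_pt. lra. Qed.

Lemma cf_grid_point_inj s p p' : Rabs s = 1 -> cf (grid_point s p) = cf (grid_point s p') -> p = p'.
Proof.
  destruct p as [j i], p' as [j' i']. intros Hs E.
  pose proof (near_grid_point s (j, i)) as H. pose proof (near_grid_point s (j', i')) as H'.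
  rewrite <- E in H'.
  destruct (near_grid_point_unique _ C Q _ s j j' i i' (Hf_H _) grid_base_ge1 grid_base_gt Hs H H')
    as [-> ->].
  reflexivity.
Qed.

Lemma chain_meets_wedge u l : chain adj u l ->
  left_of_wedge w (f u) -> right_of_wedge w (f (last l u)) ->
  exists x, In x (u :: l) /\ in_wedge w (f x).
Proof.
  apply (chain_meets_wall adj (fun x => left_of_wedge w (f x)) (fun x => right_of_wedge w (f x))).
  - intros x Hn. unfold in_wedge, left_of_wedge, right_of_wedge, Rabs in *.
    destruct (Rcase_abs (fst (f x))); [left|right]; lra.
  - intros x y Ha.
    apply (no_jump_across_wedge _ _ w (lam + C) (Hf_H x) (Hf_H y)); [unfold w, wedge_slope; lra|].
    replace (lam + C) with (lam * INR 1 + C) by (simpl; ring).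
    apply hyp_dist_le_of_gdist_le. exists [y]. simpl. repeat split; auto.
  - intros x. unfold left_of_wedge, right_of_wedge. pose proof (Hf_H x). pose proof wedge_slope_ge1. nra.
Qed.

Definition layer_const : R := 1 + (w ^ 2 * (1 + exp 1) ^ 2 * exp 1 + exp 1 ^ 3).
Definition layer_size : nat := ball_size (length S) (nceil (lam * (ln (2 * layer_const) + C))).

Lemma wedge_layer_card l : NoDup l -> (forall x, In x l -> in_wedge w (f x)) ->
  (forall x y, In x l -> In y l -> ln (snd (f x)) < ln (snd (f y)) + 1) ->
  (length l <= layer_size)%nat.
Proof.
  destruct l as [|y l']; [simpl; lia|]. intros Hnd Hw Hln.
  unfold layer_size. rewrite <- (length_ball g S y).
  apply NoDup_incl_length; [exact Hnd|]. intros x Hx.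
  pose proof wedge_slope_ge1.
  assert (Hy : In y (y :: l')) by now left.
  pose proof (cosh_hdist_wedge_layer_le (f y) (f x) w (Hf_H _) (Hf_H _) ltac:(lra)
    (Hw y Hy) (Hw x Hx) (Hln y x Hy Hx) (Hln x y Hx Hy)) as HA.
  destruct (gdist_le_of_hyp_dist_le y x _ _ (hyp_dist_le_ln _ _ _ (Hf_H _) (Hf_H _) HA)
    (nceil_spec _)) as [l0 [Hc0 [<- Hlen0]]].
  now apply in_ball_of_chain.
Qed.

Lemma wedge_window_card c0 N l : NoDup l ->
  (forall x, In x l -> in_wedge w (f x) /\ 0 <= ln (snd (f x)) + c0 < INR N) ->
  (length l <= N * layer_size)%nat.
Proof.
  intros Hnd Hl.
  apply (length_le_levels (fun x => nfloor (ln (snd (f x)) + c0))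
           (fun x => in_wedge w (f x) /\ 0 <= ln (snd (f x)) + c0)); [|exact Hnd|].
  - intros l0 n Hnd0 Hl0. apply wedge_layer_card; [exact Hnd0|intros x Hx; apply Hl0, Hx|].
    intros x y Hx Hy. destruct (Hl0 x Hx) as [[_ Hx0] Ex]. destruct (Hl0 y Hy) as [[_ Hy0] Ey].
    pose proof (nfloor_spec _ Hx0). pose proof (nfloor_spec _ Hy0). rewrite Ex in *. rewrite Ey in *. lra.
  - intros x Hx. destruct (Hl x Hx) as [Hw [H0 HN]]. repeat split; auto.
    apply INR_lt. pose proof (nfloor_spec _ H0). lra.
Qed.

Definition wedge_ball_points (U : list G) (r : nat) : list G :=
  nodup (fun x y => excluded_middle_informative (x = y))
    (filter (fun x => if Rle_dec (Rabs (fst (f x))) (w * snd (f x)) then true else false)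
       (flat_map (fun u => ball g S u r) U)).

Lemma In_wedge_ball_points U r x : In x (wedge_ball_points U r) <->
  (exists u, In u U /\ In x (ball g S u r)) /\ in_wedge w (f x).
Proof.
  unfold wedge_ball_points, in_wedge. rewrite nodup_In, filter_In, in_flat_map.
  destruct (Rle_dec (Rabs (fst (f x))) (w * snd (f x))); intuition discriminate.
Qed.

Definition level_slack (r : nat) : R := ln (K * height_ratio (lam * INR r + C)).
Definition level_pad (r : nat) : nat := nceil (2 * level_slack r + 1).
Definition levels_per_row : nat := nceil (ln Q).

Lemma ln_height_near_left_pt j i r x : gdist_le adj (left_pt (j, i)) x r ->
  INR j * ln Q - level_slack r <= ln (snd (f x)) <= INR j * ln Q + level_slack r.
Proof.
  intros Hd. pose proof (hyp_dist_le_of_gdist_le _ _ _ Hd) as H1.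
  set (Kr := height_ratio (lam * INR r + C)) in *.
  destruct (hyp_ball_in_box _ _ _ (Hf_H _) (Hf_H _) H1) as [A1 [A2 _]].
  destruct (hyp_ball_in_box _ (grid_point (-1) (j, i)) _ (Hf_H _) (grid_height_pos j)
    (near_grid_point (-1) (j, i))) as [B1 [B2 _]].
  simpl in B1, B2. fold K Q in B1, B2. fold Kr in A1, A2. unfold left_pt in *.
  pose proof (height_ratio_ge2 C). pose proof (height_ratio_ge2 (lam * INR r + C)).
  pose proof (grid_height_pos j). pose proof (Hf_H x). pose proof (Hf_H (cf (grid_point (-1) (j, i)))).
  assert (C1 : ln (Q ^ j) <= ln (K * Kr * snd (f x))) by (apply ln_le; nra).
  assert (C2 : ln (snd (f x)) <= ln (K * Kr * Q ^ j)) by (apply ln_le; nra).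
  rewrite ln_mult in C1, C2 by nra. rewrite ln_pow in C1, C2 by (pose proof grid_base_ge1; lra).
  unfold level_slack. fold Kr. lra.
Qed.

Lemma card_wedge_ball_points J I r :
  (length (wedge_ball_points (map left_pt (list_prod (seq 0 J) (seq 0 I))) r)
     <= (J * levels_per_row + level_pad r) * layer_size)%nat.
Proof.
  apply (wedge_window_card (level_slack r)); [apply NoDup_nodup|].
  intros x Hx. apply In_wedge_ball_points in Hx. destruct Hx as [[u [Hu Hb]] Hw].
  apply in_map_iff in Hu. destruct Hu as [[j i] [<- Hp]].
  apply in_prod_iff in Hp. destruct Hp as [Hj _]. apply in_seq in Hj.
  destruct (ln_height_near_left_pt j i r x (gdist_le_of_in_ball _ _ _ _ _ Hb)) as [L1 L2].
  assert (HlnQ : 0 <= ln Q) by (rewrite <- ln_1; apply ln_le; [lra|apply grid_base_ge1]).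
  assert (Hrow : INR j * ln Q <= INR J * INR levels_per_row).
  { apply Rmult_le_compat; [apply pos_INR|exact HlnQ|apply le_INR; lia|apply nceil_spec]. }
  pose proof (nceil_spec (2 * level_slack r + 1)). fold (level_pad r) in *.
  pose proof (Rmult_le_pos _ _ (pos_INR j) HlnQ).
  split; [exact Hw|]. rewrite plus_INR, mult_INR. lra.
Qed.

Definition mirror_const (I : nat) : R :=
  1 + ((2 * M + 2 * (M + K * w + 1 + 3 * M * INR I)) ^ 2 + K ^ 2) * K ^ 2.
Definition mirror_radius (I : nat) : nat := nceil (lam * (ln (2 * mirror_const I) + C)).

Lemma gdist_left_right_pt j i I : (i <= I)%nat ->
  gdist_le adj (left_pt (j, i)) (right_pt (j, i)) (mirror_radius I).
Proof.
  intros Hi. apply gdist_le_of_hyp_dist_le with (D := ln (2 * mirror_const I)); [|apply nceil_spec].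
  apply hyp_dist_le_ln; try apply Hf_H.
  apply (cosh_hdist_mirror_le _ _ (Q ^ j) (M + K * w + 1 + 3 * M * INR i)); try apply Hf_H.
  - apply grid_height_pos.
  - pose proof (shift_ratio_ge1 C). pose proof (height_ratio_ge2 C). pose proof wedge_slope_ge1.
    pose proof (pos_INR i). apply le_INR in Hi. unfold M, K in *. split; nra.
  - apply (near_grid_point (-1) (j, i)).
  - apply (near_grid_point 1 (j, i)).
Qed.

Lemma short_crossing_meets_wedge_ball_points idx p q l r : In p idx ->
  chain adj (left_pt p) l -> last l (left_pt p) = right_pt q -> (length l < r)%nat ->
  exists x, In x (left_pt p :: l) /\ In x (wedge_ball_points (map left_pt idx) r).
Proof.
  intros Hp Hch Hl Hr.
  assert (Hright : right_of_wedge w (f (last l (left_pt p)))) by (rewrite Hl; apply right_pt_right).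
  destruct (chain_meets_wedge _ _ Hch (left_pt_left p) Hright) as [x [Hx Hw]].
  exists x. split; [exact Hx|]. apply In_wedge_ball_points. split; [|exact Hw].
  exists (left_pt p). split; [now apply in_map|].
  destruct (chain_prefix adj l (left_pt p) x Hch Hx) as [l1 [Hc1 [<- Hlen1]]].
  apply in_ball_of_chain; [exact Hc1|lia].
Qed.

Lemma cayley_graph_extraterrestrial : extraterrestrial adj.
Proof.
  assert (Hb : forall x, 0 < w * snd (f x)).
  { intros x. pose proof (Hf_H x). pose proof wedge_slope_ge1. nra. }
  apply (@extraterrestrial_of_families G (nat * nat) adj (fun x => left_of_wedge w (f x))
           (fun x => right_of_wedge w (f x)) (fun x => in_wedge w (f x)));
    unfold left_of_wedge, right_of_wedge, in_wedge.
  - intros x H1 H2. pose proof (Hb x). lra.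
  - intros x H1 H2. apply Rabs_le_inv in H2. pose proof (Hb x). lra.
  - intros x H1 H2. apply Rabs_le_inv in H1. pose proof (Hb x). lra.
  - intros m. set (I := (m * layer_size * levels_per_row + 1)%nat).
    exists (mirror_radius I). intros r.
    set (J := (m * layer_size * level_pad r + 1)%nat).
    set (idx := list_prod (seq 0 J) (seq 0 I)).
    exists idx, left_pt, right_pt, (wedge_ball_points (map left_pt idx) r).
    assert (Hlen : length idx = (J * I)%nat) by (unfold idx; now rewrite length_prod, !length_seq).
    repeat split.
    + apply NoDup_list_prod; apply seq_NoDup.
    + intros E. rewrite E in Hlen. simpl in Hlen. unfold I, J in Hlen. lia.
    + intros p q. apply cf_grid_point_inj. rewrite Rabs_left; lra.
    + intros p q. apply cf_grid_point_inj. apply Rabs_R1.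
    + apply left_pt_left.
    + apply right_pt_right.
    + apply NoDup_nodup.
    + intros x Hx. apply In_wedge_ball_points in Hx. apply Hx.
    + pose proof (card_wedge_ball_points J I r) as Hcard.
      apply (Nat.mul_le_mono_l _ _ m) in Hcard.
      assert (J * I = m * ((J * levels_per_row + level_pad r) * layer_size) + 1)%nat
        by (unfold I, J; ring).
      fold idx in Hcard. lia.
    + intros [j i] Hp. apply in_prod_iff in Hp. destruct Hp as [_ Hi]. apply in_seq in Hi.
      apply gdist_left_right_pt. lia.
    + intros p q l Hp _. now apply short_crossing_meets_wedge_ball_points.
Qed.

End QuasiIsometricToH.

Theorem mainTheorem16 (G : Type) (g : group_str G) :
  (exists (S : list G) (f : G -> R * R), finite_sym_gen_set g S /\ qi_to_H g S f) ->
  group_extraterrestrial g.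
Proof.
  intros [S [f [HS [Hf_H [lam [C [Hlam [_ [Hqi Hdense]]]]]]]]].
  exists S. split; [exact HS|].
  assert (Hcf : exists cf : R * R -> G, forall z, in_H z -> hyp_dist (f (cf z)) z <= C).
  { apply (choice (fun z x => in_H z -> hyp_dist (f x) z <= C)). intros z.
    destruct (classic (in_H z)) as [Hz|Hz].
    - destruct (Hdense z Hz) as [x Hx]. now exists x.
    - exists (gone g). contradiction. }
  destruct Hcf as [cf Hcf].
  exact (cayley_graph_extraterrestrial G g S f lam C cf HS Hlam Hf_H Hqi Hcf).
Qed.
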